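(* Let $k\ge3$ be odd, $p\in[0,1]$ and $q\in[0,1]$, and consider the mean-field Edge-Majority process on the infinite tree $\mathcal T$ with root $v_0$ started from i.i.d. initial states with $\Pr(x_v^{(0)}=\mathcal R)=q$. Then $$\lim_{t\to\infty}\Pr(x_{v_0}^{(t)}=\mathcal R)=\begin{cases}\varphi^+_{p,k} & \text{if } p<p_k^\star \text{ and } q>\varphi^-_{p,k},\\ 0 & \text{if } p<p_k^\star\text{ and } q<\varphi^-_{p,k},\\ 0 & \text{if } p>p_k^\star.\end{cases}$$
   Context: $\mathcal T$ is the infinite rooted tree with root $v_0$ in which every vertex has exactly $k$ children. Each vertex $v$ has a state $x_v^{(t)}\in\{\mathcal R,\mathcal B\}$ at every round $t\in\mathbb N_0$. At $t=0$ each vertex is $\mathcal R$ with probability $q$ and $\mathcal B$ otherwise, independently. For $t\ge0$, each vertex $v$ looks at its $k$ children: for each child $w$, independently of everything else, $v$ sees $w$ as $\mathcal B$ with probability $p$ and otherwise sees $x_w^{(t)}$; then $x_v^{(t+1)}$ is the state seen by the majority of the $k$ children. $F_{p,k}(x)=\Pr[\mathrm{Bin}(k,(1-p)x)\ge(k+1)/2]$. $p_k^\star\in[1/9,1/2)$ is the (unique) value such that: for $0\le p<p_k^\star$, $F_{p,k}(x)=x$ on $[0,1]$ has exactly three solutions $0<\varphi^-_{p,k}<\varphi^+_{p,k}$; for $p=p_k^\star$ exactly two; for $p>p_k^\star$ only $0$. *)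

From HB Require Import structures.
From mathcomp Require Import all_boot all_order all_algebra.
From mathcomp Require Import all_classical all_reals all_analysis.
Set Implicit Arguments. Unset Strict Implicit. Unset Printing Implicit Defensive.
Import Order.TTheory GRing.Theory Num.Theory.
Local Open Scope ring_scope.
Local Open Scope classical_set_scope.

(* Vertices of the infinite rooted k-ary tree: the finite word of child
   indices leading from the root (listed from the vertex up to the root;
   the root v_0 is [::], and the i-th child of v is i :: v). *)
Definition vertex (k : nat) := seq 'I_k.

Definition Fpk (R : realType) (p : R) (k : nat) (x : R) : R :=
  let r := (1 - p) * x in
  \sum_(j < k.+1 | ((k.+1)./2 <= j)%N) 'C(k, j)%:R * r ^+ j * (1 - r) ^+ (k - j).

Definition fixpt (R : realType) (p : R) (k : nat) (x : R) : Prop :=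
  0 <= x <= 1 /\ Fpk p k x = x.

Definition is_pstar (R : realType) (k : nat) (ps : R) : Prop :=
  [/\ 1/9 <= ps < 1/2,
   (forall p, 0 <= p < ps -> exists a b, 0 < a < b /\
        forall x, fixpt p k x <-> (x = 0 \/ x = a \/ x = b)),
   (exists a, 0 < a /\ forall x, fixpt ps k x <-> (x = 0 \/ x = a)) &
   (forall p, ps < p <= 1 -> forall x, fixpt p k x <-> x = 0)].

(* Index set of the primitive random variables: initial states of vertices,
   and noise coins (round t, vertex v, child i). *)
Definition rv_index (k : nat) := (vertex k + (nat * vertex k * 'I_k))%type.

Definition mutually_independent d (T : measurableType d) (R : realType)
  (P : probability T R) (I : eqType) (E : I -> set T) : Prop :=
  forall s : seq I, uniq s ->
    P (\big[setI/setT]_(j <- s) E j) = (\prod_(j <- s) P (E j))%E.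

(* The Edge-Majority process driven by initial states [init v] (true = R)
   and noise coins [coin t v i] (true = at round t, v sees its i-th child as B). *)
Fixpoint em_state (k : nat) (T : Type) (init : vertex k -> T -> bool)
  (coin : nat -> vertex k -> 'I_k -> T -> bool) (t : nat) (v : vertex k) (w : T)
  : bool :=
  match t with
  | 0 => init v w
  | t'.+1 =>
      ((k.+1)./2 <= \sum_(i < k) (~~ coin t' v i w && em_state init coin t' (i :: v) w))%N
  end.

Definition rv_event (k : nat) (T : Type) (init : vertex k -> T -> bool)
  (coin : nat -> vertex k -> 'I_k -> T -> bool) (j : rv_index k) : set T :=
  match j with
  | inl v => [set w | init v w]
  | inr (t, v, i) => [set w | coin t v i w]
  end.

From HB Require Import structures.
From mathcomp Require Import all_boot all_order all_algebra.
From mathcomp Require Import all_classical all_reals all_analysis.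
From mathcomp Require Import ring lra zify.
Import Order.TTheory GRing.Theory Num.Theory.
Import numFieldNormedType.Exports.
Set Implicit Arguments. Unset Strict Implicit. Unset Printing Implicit Defensive.
Local Open Scope ring_scope.
Local Open Scope classical_set_scope.

Section BinomialTail.
Variable R : realType.
Implicit Types r s : R.

Fixpoint binom_tail (n j : nat) r : R :=
  match n, j with
  | 0, _ => (j == 0)%:R
  | _.+1, 0 => 1
  | n'.+1, j'.+1 => r * binom_tail n' j' r + (1 - r) * binom_tail n' j r
  end.

Definition binom_term n j i r : R :=
  if (j <= i)%N then 'C(n, i)%:R * r ^+ i * (1 - r) ^+ (n - i) else 0.

Lemma binom_termS n j i r :
  binom_term n.+1 j i.+1 r =
  r * binom_term n j.-1 i r + 'C(n, i.+1)%:R * r ^+ i.+1 * (1 - r) ^+ (n - i) *+ (j <= i.+1)%N.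
Proof.
rewrite /binom_term subSS; case: j => [|j] /=; rewrite ?ltnS.
  by rewrite binS natrD exprS mulr1n; ring.
by case: ifP => _; rewrite ?mulr0 ?add0r ?mulr1n ?binS ?natrD ?exprS //; ring.
Qed.

Lemma binom_term_1subr n j i r :
  (1 - r) * binom_term n j i.+1 r =
  'C(n, i.+1)%:R * r ^+ i.+1 * (1 - r) ^+ (n - i) *+ (j <= i.+1)%N.
Proof.
rewrite /binom_term; case: ifP => _ /=; last by rewrite mulr0.
rewrite mulr1n; case: (ltnP i n) => [lt_in|le_ni].
  by rewrite -(subnSK lt_in) [(1 - r) ^+ _.+1]exprS; ring.
by rewrite bin_small ?ltnS //; ring.
Qed.

Lemma binom_term_sumS n j r :
  \sum_(0 <= i < n.+2) binom_term n.+1 j i r =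
  r * \sum_(0 <= i < n.+1) binom_term n j.-1 i r +
  (1 - r) * \sum_(0 <= i < n.+1) binom_term n j i r.
Proof.
rewrite big_nat_recl // (eq_bigr _ (fun i _ => binom_termS n j i r)) big_split /=.
rewrite [X in _ = _ + (1 - r) * X]big_nat_recl // mulrDr (mulr_sumr _ _ _ (1 - r)).
rewrite (eq_bigr _ (fun i _ => binom_term_1subr n j i r)) -mulr_sumr.
rewrite [X in _ + (_ + X) = _]big_nat_recr //= bin_small // !mul0r mul0rn addr0.
rewrite /binom_term !bin0 !subn0 !expr0 /=.
by case: ifP => _; rewrite ?mulr0 ?exprS; ring.
Qed.

Lemma binom_tail0 n r : binom_tail n 0 r = 1.
Proof. by case: n. Qed.

Lemma binom_tail_sumE n j r :
  \sum_(0 <= i < n.+1) binom_term n j i r = binom_tail n j r.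
Proof.
elim: n j => [|n IH] j.
  by rewrite big_nat1 /binom_term bin0 !expr0 !mulr1; case: j.
by rewrite binom_term_sumS !IH; case: j => [|j] //=; rewrite binom_tail0; ring.
Qed.

Lemma Fpk_binom_tail p k x : Fpk p k x = binom_tail k (k.+1)./2 ((1 - p) * x).
Proof. by rewrite -binom_tail_sumE /Fpk big_mkcond big_mkord. Qed.

Section UnitInterval.
Context {r : R} (r01 : 0 <= r <= 1).

Lemma binom_tail_ge0 n j : 0 <= binom_tail n j r.
Proof.
have /andP[r0 r1] := r01.
elim: n j => [|n IH] [|j] //=; rewrite ?ler01 //.
by rewrite addr_ge0 // mulr_ge0 // subr_ge0.
Qed.

Lemma binom_tail_le1 n j : binom_tail n j r <= 1.
Proof.
have /andP[r0 r1] := r01.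
elim: n j => [|n IH] [|j] //=; rewrite ?ler01 //.
have := IH j; have := IH j.+1; have := binom_tail_ge0 n j; have := binom_tail_ge0 n j.+1.
nra.
Qed.

Lemma binom_tail_leS n j : binom_tail n j.+1 r <= binom_tail n j r.
Proof.
have /andP[r0 r1] := r01.
elim: n j => [|n IH] [|j] //=.
- by have := binom_tail_le1 n 0; have := binom_tail_le1 n 1; rewrite binom_tail0; nra.
- by have := IH j; have := IH j.+1; nra.
Qed.

Lemma binom_tail_le_pow n j : binom_tail n j r <= 2%:R ^+ n * r ^+ j.
Proof.
have /andP[r0 r1] := r01.
elim: n j => [|n IH] [|j] /=.
- by rewrite !expr0 mulr1.
- by rewrite expr0 mul1r exprn_ge0.
- by rewrite expr0 mulr1 exprn_ege1 // ler1n.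
- have := IH j; have := IH j.+1; rewrite !exprS.
  have : 0 <= 2%:R ^+ n * r ^+ j :> R by rewrite mulr_ge0 // exprn_ge0.
  nra.
Qed.

End UnitInterval.

Lemma binom_tail_homo n j r s : 0 <= r -> r <= s -> s <= 1 ->
  binom_tail n j r <= binom_tail n j s.
Proof.
move=> r0 rs s1.
have r01 : 0 <= r <= 1 by apply/andP; split => //; lra.
have s01 : 0 <= s <= 1 by apply/andP; split => //; lra.
elim: n j => [|n IH] [|j] //=.
have := IH j; have := IH j.+1; have := binom_tail_leS s01 n j.
have := binom_tail_ge0 r01 n j; have := binom_tail_le1 s01 n j.+1.
nra.
Qed.

Lemma binom_tail_continuous n j : continuous (binom_tail n j).
Proof.
move=> x; elim: n j => [|n IH] [|j]; try exact: cvg_cst.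
have cvg_id' : y @[y --> x] --> x by exact: cvg_id.
have cvg_1subr : (1 - y) @[y --> x] --> 1 - x by apply: cvgB => //; exact: cvg_cst.
exact: (cvgD (cvgM cvg_id' (IH j)) (cvgM cvg_1subr (IH j.+1))).
Qed.

End BinomialTail.

Section FixedPointSign.
Variables (R : realType) (F : R -> R).
Hypothesis F_cont : continuous F.

Lemma ivt_fixpoint a b : a <= b -> (F a - a) * (F b - b) <= 0 ->
  exists2 c, a <= c <= b & F c = c.
Proof.
move=> ab sgn.
have cont : {within `[a, b], continuous (fun x => F x - x)}.
  by apply: continuous_subspaceT => x; apply: cvgB; [exact: F_cont | exact: cvg_id].
have [|c cab Fc] := IVT (v := 0) ab cont.
  rewrite ge_min le_max !subr_le0 !subr_ge0.
  by case: (leP (F a) a) => Fa; case: (leP (F b) b) => Fb //=; rewrite ?orbT //; nra.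
by exists c; [rewrite in_itv in cab | apply/eqP; rewrite -subr_eq0 Fc].
Qed.

Lemma lt_id_fixpoint_free x y : x <= y -> (forall z, x <= z <= y -> F z != z) ->
  (F x < x) = (F y < y).
Proof.
move=> xy nofix.
suff sign_change : (F x - x) * (F y - y) <= 0 -> False.
  by apply/idP/idP => [Fx|Fy]; rewrite ltNge; apply/negP => F_ge; apply: sign_change; nra.
by move=> /(ivt_fixpoint xy) [c /nofix /eqP].
Qed.

End FixedPointSign.

Section MonotoneIteration.
Variables (R : realType) (F : R -> R).
Hypothesis F_cont : continuous F.
Hypothesis F_homo : forall x y, 0 <= x -> x <= y -> y <= 1 -> F x <= F y.
Hypothesis F01 : forall x, 0 <= x <= 1 -> 0 <= F x <= 1.

Lemma iter_in01 q t : 0 <= q <= 1 -> 0 <= iter t F q <= 1.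
Proof. by move=> q01; elim: t => //= t IH; exact: F01. Qed.

Lemma cvg_iter_fixpoint q L : (fun t => iter t F q) @ \oo --> L -> F L = L.
Proof.
move=> cvgL; have FL : (F \o (fun t => iter t F q)) @ \oo --> F L.
  by apply: continuous_cvg => //; exact: F_cont.
have : (F \o (fun t => iter t F q)) @ \oo --> L.
  suff -> : F \o (fun t => iter t F q) = [sequence iter n.+1 F q]_n by rewrite (cvg_shiftS (fun t => iter t F q)).
  by apply/funext.
exact: cvg_unique FL.
Qed.

Lemma iter_cvg_down q a : 0 <= a <= q -> q <= 1 -> F a = a ->
  (forall x, a < x <= q -> F x < x) -> (fun t => iter t F q) @ \oo --> a.
Proof.
move=> /andP[a0 aq] q1 Fa below; set u := fun t => iter t F q.
have u01 t : 0 <= u t <= 1 by apply: iter_in01; lra.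
have u_ge_a t : a <= u t.
  by elim: t => //= t IH; rewrite -Fa F_homo //; have /andP[] := u01 t.
have Fq : F q <= q.
  have [<-|aNq] := eqVneq a q; first by rewrite Fa.
  by apply/ltW/below; rewrite lexx andbT lt_neqAle aNq aq.
have u_noninc : nonincreasing_seq u.
  apply/nonincreasing_seqP; elim=> [|t IH] //=.
  move: (u01 t) (u01 t.+1) => /andP[_ ut1] /andP[ut0 _].
  exact: F_homo.
have cvg_u : cvgn u.
  by apply: nonincreasing_is_cvgn => //; exists a => _ [t _ <-].
have [L_ge_a L_le_q] : a <= limn u /\ limn u <= q.
  split; last exact: (nonincreasing_cvgn_ge u_noninc cvg_u 0).
  by apply: limr_ge => //; apply: nearW => t; exact: u_ge_a.
have FL := @cvg_iter_fixpoint q _ cvg_u.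
suff <- : limn u = a by [].
apply/eqP; rewrite eq_le L_ge_a andbT leNgt; apply/negP => a_lt_L.
by have := below (limn u); rewrite a_lt_L L_le_q FL ltxx => /(_ isT).
Qed.

Lemma iter_cvg_up q b : 0 <= q <= b -> b <= 1 -> F b = b ->
  (forall x, q <= x < b -> x < F x) -> (fun t => iter t F q) @ \oo --> b.
Proof.
move=> /andP[q0 qb] b1 Fb above; set u := fun t => iter t F q.
have u01 t : 0 <= u t <= 1 by apply: iter_in01; lra.
have u_le_b t : u t <= b.
  by elim: t => //= t IH; rewrite -Fb F_homo //; have /andP[] := u01 t.
have Fq : q <= F q.
  have [->|qNb] := eqVneq q b; first by rewrite Fb.
  by apply/ltW/above; rewrite lexx lt_neqAle qNb qb.
have u_nondec : nondecreasing_seq u.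
  apply/nondecreasing_seqP; elim=> [|t IH] //=.
  move: (u01 t) (u01 t.+1) => /andP[ut0 _] /andP[_ ut1].
  exact: F_homo.
have cvg_u : cvgn u.
  by apply: nondecreasing_is_cvgn => //; exists b => _ [t _ <-].
have [L_ge_q L_le_b] : q <= limn u /\ limn u <= b.
  split; first exact: (nondecreasing_cvgn_le u_nondec cvg_u 0).
  by apply: limr_le => //; apply: nearW => t; exact: u_le_b.
have FL := @cvg_iter_fixpoint q _ cvg_u.
suff <- : limn u = b by [].
apply/eqP; rewrite eq_le L_le_b /= leNgt; apply/negP => L_lt_b.
by have := above (limn u); rewrite L_lt_b L_ge_q FL ltxx => /(_ isT).
Qed.

End MonotoneIteration.

Section IndependentCoordinates.
Variables (R : realType) (d : measure_display) (T : measurableType d).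
Variables (P : probability T R) (J : eqType) (omega : T -> J -> bool) (mu : J -> R).

Definition event (f : (J -> bool) -> bool) : set T := [set w | f (omega w)].

Hypothesis measurable_coord : forall j, measurable (event (fun a => a j)).
Hypothesis prob_all_coords : forall s, uniq s ->
  P (event (fun a => all a s)) = (\prod_(j <- s) mu j)%:E.

Definition pr (A : set T) : R := fine (P A).

Definition depends_on (s : seq J) (f : (J -> bool) -> bool) :=
  forall a a', {in s, a =1 a'} -> f a = f a'.

Definition cofactor (f : (J -> bool) -> bool) j b a := f [eta a with j |-> b].

Definition agree (q : seq J) (c a : J -> bool) := all (fun j => a j == c j) q.

Definition bern j (b : bool) := if b then mu j else 1 - mu j.

Lemma event_ext f g : f =1 g -> event f = event g.
Proof. by move=> fg; rewrite /event; apply/seteqP; split => w /=; rewrite fg. Qed.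

Lemma event_and f g : event (fun a => f a && g a) = event f `&` event g.
Proof. by rewrite /event; apply/seteqP; split => w /=; [move/andP | case=> /= -> ->]. Qed.

Lemma event_or f g : event (fun a => f a || g a) = event f `|` event g.
Proof. by rewrite /event; apply/seteqP; split => w /=; [move/orP | case=> /= ->; rewrite ?orbT]. Qed.

Lemma event_not f : event (fun a => ~~ f a) = ~` event f.
Proof. by apply/seteqP; split => w /= /negP. Qed.

Lemma event_true : event (fun _ => true) = setT.
Proof. by apply/seteqP; split. Qed.

Lemma event_false : event (fun _ => false) = set0.
Proof. by apply/seteqP; split. Qed.

Lemma depends_on_sub s s' f : depends_on s f -> {subset s <= s'} -> depends_on s' f.
Proof. by move=> fs ss' a a' aa'; apply: fs => j /ss' /aa'. Qed.

Lemma depends_on_nil f : depends_on [::] f -> f =1 fun _ => f xpred0.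
Proof. by move=> fs a; apply: fs. Qed.

Lemma depends_on_cofactor s f j b : depends_on (j :: s) f -> depends_on s (cofactor f j b).
Proof.
move=> fs a a' aa'; apply: fs => i; rewrite inE /=.
by case: (i == j) => //= /aa'.
Qed.

Lemma cofactorE s f j b a : depends_on s f -> a j = b -> cofactor f j b a = f a.
Proof. by move=> fs ajb; apply: fs => i _ /=; case: eqP => // ->. Qed.

Lemma shannon_expansion s f j : depends_on s f ->
  f =1 fun a => (a j && cofactor f j true a) || (~~ a j && cofactor f j false a).
Proof.
move=> fs a; case: (boolP (a j)) => aj /=; first by rewrite orbF (cofactorE fs aj).
by rewrite (cofactorE fs (negbTE aj)).
Qed.

Lemma measurable_event s f : depends_on s f -> measurable (event f).
Proof.
elim: s f => [|j s IH] f fs.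
  rewrite (event_ext (depends_on_nil fs)).
  by case: (f _); [rewrite event_true | rewrite event_false].
rewrite (event_ext (shannon_expansion j fs)) event_or !event_and event_not.
by apply: measurableU; apply: measurableI => //; try apply: measurableC => //;
  apply: IH; exact: depends_on_cofactor.
Qed.

Lemma depends_on_all s : depends_on s (fun a => all a s).
Proof. by move=> a a' aa'; apply: eq_in_all. Qed.

Lemma depends_on_agree q c : depends_on q (agree q c).
Proof. by move=> a a' aa'; apply: eq_in_all => j /aa' ->. Qed.

Lemma depends_on_and s r f g : depends_on s f -> depends_on r g ->
  depends_on (s ++ r) (fun a => f a && g a).
Proof.
move=> fs gr a a' aa'.
by rewrite (fs a a') ?(gr a a') // => j js; apply: aa'; rewrite mem_cat js ?orbT.
Qed.

Lemma depends_on_coord j : depends_on [:: j] (fun a => a j).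
Proof. by move=> a a' aa'; apply: aa'; rewrite mem_head. Qed.

Lemma depends_on_not s f : depends_on s f -> depends_on s (fun a => ~~ f a).
Proof. by move=> fs a a' aa'; rewrite (fs a a' aa'). Qed.

Lemma pr_measurableE A : measurable A -> P A = (pr A)%:E.
Proof. by move=> mA; rewrite /pr fineK // fin_num_measure. Qed.

Lemma pr_true : pr (event (fun _ => true)) = 1.
Proof. by rewrite event_true /pr probability_setT. Qed.

Lemma pr_false : pr (event (fun _ => false)) = 0.
Proof. by rewrite event_false /pr measure0. Qed.

Lemma pr_split s f g : depends_on s f -> depends_on s g ->
  pr (event f) = pr (event (fun a => f a && g a)) + pr (event (fun a => f a && ~~ g a)).
Proof.
move=> fs gs.
have fgs : depends_on s (fun a => f a && g a).
  by move=> a a' aa'; rewrite (fs a a' aa') (gs a a' aa').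
have fNgs : depends_on s (fun a => f a && ~~ g a).
  by move=> a a' aa'; rewrite (fs a a' aa') (gs a a' aa').
have -> : event f = event (fun a => f a && g a) `|` event (fun a => f a && ~~ g a).
  by rewrite -event_or; apply: event_ext => a; case: (f a); case: (g a).
have mfg := measurable_event fgs; have mfNg := measurable_event fNgs.
rewrite /pr measureU //; first by rewrite fineD // fin_num_measure.
by rewrite -event_and -event_false; apply: event_ext => a; case: (f a); case: (g a).
Qed.

Lemma pr_not s f : depends_on s f -> pr (event (fun a => ~~ f a)) = 1 - pr (event f).
Proof.
move=> fs; have ts : depends_on s (fun _ => true) by [].
by have := pr_split ts fs; rewrite pr_true /= => ->; ring.
Qed.

Lemma pr_all s : uniq s -> pr (event (fun a => all a s)) = \prod_(j <- s) mu j.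
Proof. by move=> us; rewrite /pr prob_all_coords. Qed.

Lemma pr_coord j : pr (event (fun a => a j)) = mu j.
Proof.
have := @pr_all [:: j] isT; rewrite big_seq1 => <-.
by congr pr; apply: event_ext => a /=; rewrite andbT.
Qed.

Lemma pr_agree_all q c r : uniq (q ++ r) ->
  pr (event (fun a => agree q c a && all a r)) =
  \prod_(j <- q) bern j (c j) * \prod_(j <- r) mu j.
Proof.
elim: q r => [|j q IH] r /=; first by move=> ur; rewrite big_nil mul1r -pr_all.
rewrite mem_cat negb_or => /andP[/andP[jNq jNr] uqr]; rewrite big_cons.
have uqjr : uniq (q ++ j :: r) by move: uqr; rewrite !cat_uniq /= jNr (negbTE jNq).
have := IH (j :: r) uqjr; rewrite big_cons.
case: (boolP (c j)) => cj prj.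
  have -> : event (fun a => (a j == true) && agree q c a && all a r) =
            event (fun a => agree q c a && all a (j :: r)).
    by apply: event_ext => a /=; case: (a j); rewrite ?andbF.
  by rewrite prj /bern; ring.
have qrs : depends_on (j :: q ++ r) (fun a => agree q c a && all a r).
  apply: (depends_on_sub (depends_on_and (@depends_on_agree q c) (@depends_on_all r)) _).
  by move=> x; rewrite inE => ->; rewrite orbT.
have js : depends_on (j :: q ++ r) (fun a => a j).
  by move=> a a' aa'; apply: aa'; rewrite mem_head.
have := pr_split qrs js; rewrite IH //.
have -> : event (fun a => agree q c a && all a r && a j) =
          event (fun a => agree q c a && all a (j :: r)).
  by apply: event_ext => a /=; case: (a j); rewrite ?andbF ?andbT.
have -> : event (fun a => (a j == false) && agree q c a && all a r) =
          event (fun a => agree q c a && all a r && ~~ a j).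
  by apply: event_ext => a /=; case: (a j); rewrite ?andbF ?andbT.
by rewrite prj /bern; lra.
Qed.

Lemma pr_agree q c : uniq q -> pr (event (agree q c)) = \prod_(j <- q) bern j (c j).
Proof.
move=> uq; have := @pr_agree_all q c [::]; rewrite cats0 big_nil mulr1 => <- //.
by congr pr; apply: event_ext => a /=; rewrite andbT.
Qed.

Lemma agree_cons_upd q c j b a : j \notin q ->
  agree (j :: q) [eta c with j |-> b] a = (a j == b) && agree q c a.
Proof.
move=> jNq; rewrite /agree /= eqxx; congr (_ && _); apply: eq_in_all => i iq.
by case: (i =P j) => // ij; rewrite -ij iq in jNq.
Qed.

Lemma pr_agree_cons q c j b : uniq q -> j \notin q ->
  pr (event (agree (j :: q) [eta c with j |-> b])) = bern j b * pr (event (agree q c)).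
Proof.
move=> uq jNq; rewrite !pr_agree /= ?jNq // big_cons eqxx; congr (_ * _).
by apply: eq_big_seq => i iq; case: (i =P j) => // ij; rewrite -ij iq in jNq.
Qed.

Lemma pr_expand_coord s g q c j : depends_on s g -> j \notin q ->
  pr (event (fun a => g a && agree q c a)) =
  pr (event (fun a => cofactor g j true a && agree (j :: q) [eta c with j |-> true] a)) +
  pr (event (fun a => cofactor g j false a && agree (j :: q) [eta c with j |-> false] a)).
Proof.
move=> gs jNq.
have gqs : depends_on (j :: s ++ q) (fun a => g a && agree q c a).
  apply: (depends_on_sub (depends_on_and gs (@depends_on_agree q c)) _).
  by move=> x; rewrite inE => ->; rewrite orbT.
have js : depends_on (j :: s ++ q) (fun a => a j).
  by move=> a a' aa'; apply: aa'; rewrite mem_head.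
rewrite (pr_split gqs js); congr (pr _ + pr _); apply: event_ext => a;
  rewrite agree_cons_upd //; case: (boolP (a j)) => aj; rewrite ?andbF //=.
  by rewrite (cofactorE gs aj) andbT.
by rewrite (cofactorE gs (negbTE aj)) andbT.
Qed.

Lemma pr_and_agree s f q c : depends_on s f -> uniq q -> {in s, forall x, x \notin q} ->
  pr (event (fun a => f a && agree q c a)) = pr (event f) * pr (event (agree q c)).
Proof.
elim: s f q c => [|j s IH] f q c fs uq sNq.
  rewrite (event_ext (g := fun a => f xpred0 && agree q c a)) => [|a]; last first.
    by rewrite (depends_on_nil fs).
  rewrite (event_ext (depends_on_nil fs)).
  case: (f _); first by rewrite pr_true mul1r.
  by rewrite pr_false mul0r.
have [js|jNs] := boolP (j \in s).
  apply: IH => // [|x xs]; last by apply: sNq; rewrite inE xs orbT.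
  by apply: (depends_on_sub fs) => x; rewrite inE => /predU1P[->|].
have expand q' c' : uniq q' -> {in j :: s, forall x, x \notin q'} ->
    pr (event (fun a => f a && agree q' c' a)) =
    (pr (event (cofactor f j true)) * bern j true +
     pr (event (cofactor f j false)) * bern j false) * pr (event (agree q' c')).
  move=> uq' sNq'; have jNq' : j \notin q' by apply: sNq'; rewrite mem_head.
  rewrite (pr_expand_coord c' fs jNq').
  have sNjq' : {in s, forall x, x \notin j :: q'}.
    move=> x xs; rewrite inE negb_or sNq' ?inE ?xs ?orbT // andbT.
    by apply/eqP => xj; rewrite -xj xs in jNs.
  have ujq' : uniq (j :: q') by rewrite /= jNq' uq'.
  have IHb b := IH (cofactor f j b) (j :: q') [eta c' with j |-> b]
    (depends_on_cofactor b fs) ujq' sNjq'.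
  by rewrite !IHb !pr_agree_cons //; ring.
rewrite expand //; congr (_ * _).
have := expand [::] c isT (fun x _ => isT); rewrite pr_agree // big_nil mulr1 => <-.
by congr pr; apply: event_ext => a; rewrite andbT.
Qed.

Lemma cofactor_andl s f g j b a : depends_on s f -> j \notin s ->
  cofactor (fun a => f a && g a) j b a = f a && cofactor g j b a.
Proof.
move=> fs jNs; rewrite /cofactor (fs _ a) // => i i_s /=.
by case: (i =P j) => // ij; rewrite -ij i_s in jNs.
Qed.

Lemma pr_and_and_agree s r f g q c :
  depends_on s f -> depends_on r g -> uniq q ->
  {in s, forall x, x \notin q} -> {in r, forall x, x \notin q} ->
  {in s, forall x, x \notin r} ->
  pr (event (fun a => f a && g a && agree q c a)) =
  pr (event f) * pr (event (fun a => g a && agree q c a)).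
Proof.
elim: r g q c => [|j r IH] g q c fs gr uq sNq rNq sNr.
  have gE := depends_on_nil gr.
  case: (boolP (g xpred0)) => g0.
    rewrite (event_ext (g := fun a => f a && agree q c a)) => [|a]; last by rewrite gE g0 andbT.
    rewrite (event_ext (f := fun a => g a && agree q c a) (g := agree q c)) => [|a]; last by rewrite gE g0.
    exact: pr_and_agree fs uq sNq.
  rewrite (event_ext (f := fun a => f a && g a && agree q c a) (g := xpred0)) => [|a]; last by rewrite gE (negbTE g0) andbF.
  rewrite (event_ext (f := fun a => g a && agree q c a) (g := xpred0)) => [|a]; last by rewrite gE (negbTE g0).
  by rewrite pr_false mulr0.
have [jr|jNr] := boolP (j \in r).
  apply: IH => // [|x xr|x xs].
  - by apply: (depends_on_sub gr) => x; rewrite inE => /predU1P[->|].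
  - by apply: rNq; rewrite inE xr orbT.
  - by have := sNr x xs; rewrite inE negb_or => /andP[].
have jNq : j \notin q by apply: rNq; rewrite mem_head.
have jNs : j \notin s by apply/negP => /sNr; rewrite mem_head.
rewrite (pr_expand_coord c (depends_on_and fs gr) jNq) (pr_expand_coord c gr jNq).
have ujq : uniq (j :: q) by rewrite /= jNq uq.
have sNjq : {in s, forall x, x \notin j :: q}.
  move=> x xs; rewrite inE negb_or sNq // andbT.
  by apply/eqP => xj; rewrite -xj xs in jNs.
have rNjq : {in r, forall x, x \notin j :: q}.
  move=> x xr; rewrite inE negb_or rNq ?inE ?xr ?orbT // andbT.
  by apply/eqP => xj; rewrite -xj xr in jNr.
have sNr' : {in s, forall x, x \notin r}.
  by move=> x xs; have := sNr x xs; rewrite inE negb_or => /andP[].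
have IHb b : pr (event (fun a => cofactor (fun a => f a && g a) j b a &&
                                 agree (j :: q) [eta c with j |-> b] a)) =
             pr (event f) * pr (event (fun a => cofactor g j b a &&
                                 agree (j :: q) [eta c with j |-> b] a)).
  rewrite -(IH _ _ _ fs (depends_on_cofactor b gr) ujq sNjq rNjq sNr').
  by congr pr; apply: event_ext => a; rewrite (cofactor_andl _ _ _ fs jNs).
by rewrite !IHb mulrDr.
Qed.

Lemma pr_and_indep s r f g : depends_on s f -> depends_on r g ->
  {in s, forall x, x \notin r} ->
  pr (event (fun a => f a && g a)) = pr (event f) * pr (event g).
Proof.
move=> fs gr sNr.
have := pr_and_and_agree xpred0 fs gr (isT : uniq [::]) (fun x _ => isT) (fun x _ => isT) sNr.
rewrite (event_ext (f := fun a => _ && agree _ _ a) (g := fun a => f a && g a)) => [->|a];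
  last by rewrite andbT.
by congr (_ * pr _); apply: event_ext => a; rewrite andbT.
Qed.

Lemma count_depends_on (I : eqType) (Z : I -> (J -> bool) -> bool) S (l : seq I) a a' :
  {in l, forall i, depends_on (S i) (Z i)} -> {in flatten (map S l), a =1 a'} ->
  (\sum_(i <- l) Z i a = \sum_(i <- l) Z i a')%N.
Proof.
move=> ZS aa'; apply: eq_big_seq => i il; congr nat_of_bool.
apply: (ZS i il) => x xi; apply: aa'; apply/flattenP.
by exists (S i) => //; apply: map_f.
Qed.

Lemma pr_count_ge (I : eqType) (Z : I -> (J -> bool) -> bool) S r (l : seq I) :
  uniq l -> {in l, forall i, depends_on (S i) (Z i)} ->
  {in l, forall i, pr (event (Z i)) = r} ->
  {in l &, forall i i', i != i' -> {in S i, forall x, x \notin S i'}} ->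
  forall n, pr (event (fun a => (n <= \sum_(i <- l) Z i a)%N)) = binom_tail (size l) n r.
Proof.
elim: l => [|i l IH] /= uil ZS Zr disj [|n].
- by rewrite (event_ext (g := xpredT)) ?pr_true.
- by rewrite (event_ext (g := xpred0)) ?pr_false // => a; rewrite big_nil.
- by rewrite (event_ext (g := xpredT)) ?pr_true ?binom_tail0.
have /andP[iNl ul] := uil.
have sub : {subset l <= i :: l} by move=> x xl; rewrite inE xl orbT.
have IH' := IH ul (sub_in1 sub ZS) (sub_in1 sub Zr) (sub_in2 sub disj).
have Zi := ZS i (mem_head i l).
have count_l m : depends_on (flatten (map S l)) (fun a => (m <= \sum_(x <- l) Z x a)%N).
  by move=> a a' aa'; rewrite (count_depends_on (sub_in1 sub ZS) aa').
have iNl' : {in S i, forall x, x \notin flatten (map S l)}.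
  move=> x xi; apply/negP => /flatten_mapP[i' i'l xi'].
  apply/negP: xi'; apply: disj xi; rewrite ?mem_head ?sub //.
  by apply: contraNneq iNl => ->.
have ZiSl : depends_on (S i ++ flatten (map S l)) (Z i).
  by apply: (depends_on_sub Zi) => x xi; rewrite mem_cat xi.
have countSil : depends_on (S i ++ flatten (map S l))
    (fun a => (n.+1 <= Z i a + \sum_(x <- l) Z x a)%N).
  move=> a a' aa'; rewrite (ZiSl a a' aa') (count_depends_on (a' := a') (sub_in1 sub ZS)) // => x xl.
  by apply: aa'; rewrite mem_cat xl orbT.
rewrite (event_ext (g := fun a => (n.+1 <= Z i a + \sum_(x <- l) Z x a)%N)) => [|a];
  last by rewrite big_cons.
rewrite (pr_split countSil ZiSl).
rewrite (event_ext (f := fun a => _ && Z i a)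
                   (g := fun a => Z i a && (n <= \sum_(x <- l) Z x a)%N)) => [|a];
  last by case: (Z i a); rewrite /= ?andbT ?andbF.
rewrite (event_ext (f := fun a => _ && ~~ Z i a)
                   (g := fun a => ~~ Z i a && (n.+1 <= \sum_(x <- l) Z x a)%N)) => [|a];
  last by case: (Z i a); rewrite /= ?andbT ?andbF.
rewrite (pr_and_indep Zi (count_l n) iNl') (pr_and_indep (depends_on_not Zi) (count_l n.+1) iNl') (pr_not Zi).
by rewrite !IH' Zr ?mem_head.
Qed.

End IndependentCoordinates.

Section EdgeMajority.
Variables (R : realType) (k : nat) (d : measure_display) (T : measurableType d).
Variables (P : probability T R) (p q : R).
Variables (init : vertex k -> T -> bool) (coin : nat -> vertex k -> 'I_k -> T -> bool).
Hypothesis measurable_rv : forall j, measurable (rv_event init coin j).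
Hypothesis independent_rv : mutually_independent P (rv_event init coin).
Hypothesis prob_init : forall v, P [set w | init v w] = q%:E.
Hypothesis prob_coin : forall t v i, P [set w | coin t v i w] = p%:E.

Definition rv_outcome (w : T) (j : rv_index k) : bool :=
  match j with inl v => init v w | inr (t, v, i) => coin t v i w end.

Definition rv_prob (j : rv_index k) : R := if j is inl _ then q else p.

Definition em_state_of t v (a : rv_index k -> bool) : bool :=
  em_state (fun v a => a (inl v)) (fun t v i a => a (inr (t, v, i))) t v a.

Lemma em_stateE t v w : em_state init coin t v w = em_state_of t v (rv_outcome w).
Proof. by elim: t v => [|t IH] v //=; congr (_ <= _)%N; apply: eq_bigr => i _; rewrite IH. Qed.

Lemma rv_eventE j : rv_event init coin j = event rv_outcome (fun a => a j).
Proof. by case: j => [v|[[t v] i]]. Qed.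

Lemma measurable_rv_coord j : measurable (event rv_outcome (fun a => a j)).
Proof. by rewrite -rv_eventE. Qed.

Lemma prob_all_rv s : uniq s ->
  P (event rv_outcome (fun a => all a s)) = (\prod_(j <- s) rv_prob j)%:E.
Proof.
move=> us; have := independent_rv us.
have -> : \big[setI/setT]_(j <- s) rv_event init coin j = event rv_outcome (fun a => all a s).
  elim: s {us} => [|j s IH]; first by rewrite big_nil -(event_true rv_outcome).
  by rewrite big_cons IH rv_eventE -event_and.
by move=> ->; rewrite -prodEFin; apply: eq_bigr => -[v|[[t v] i]] _; [exact: prob_init | exact: prob_coin].
Qed.

Fixpoint em_support t (v : vertex k) : seq (rv_index k) :=
  if t is t'.+1 then
    flatten [seq inr (t', v, i) :: em_support t' (i :: v) | i <- index_enum 'I_k]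
  else [:: inl v].

Lemma em_state_of_depends_on t v : depends_on (em_support t v) (em_state_of t v).
Proof.
elim: t v => [|t IH] v a a' aa' /=; first by apply: aa'; rewrite mem_head.
congr (_ <= _)%N; apply: eq_bigr => i _.
have sub : {subset inr (t, v, i) :: em_support t (i :: v) <= em_support t.+1 v}.
  move=> x xi; apply/flattenP; exists (inr (t, v, i) :: em_support t (i :: v)) => //.
  by apply: map_f; exact: mem_index_enum.
rewrite (aa' (inr (t, v, i))) ?sub ?mem_head //; congr (nat_of_bool (_ && _)).
by apply: IH => x xi; apply/aa'/sub; rewrite inE xi orbT.
Qed.

Definition in_cone t (v : vertex k) (x : rv_index k) : Prop :=
  match x with
  | inl u => exists2 w, size w = t & u = w ++ v
  | inr (s, u, _) => (s < t)%N /\ exists2 w, size w = (t - s.+1)%N & u = w ++ v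
  end.

Lemma em_support_in_cone t v x : x \in em_support t v -> in_cone t v x.
Proof.
elim: t v => [|t IH] v /=; first by rewrite inE => /eqP ->; exists [::].
case/flatten_mapP=> i _; rewrite inE => /predU1P[->|/IH {IH}].
  by split => //; exists [::]; rewrite ?subnn.
case: x => [u|[[s u] i']] /=.
  by case=> w sw ->; exists (rcons w i); rewrite ?size_rcons ?sw ?cat_rcons.
case=> st [w sw ->]; split; first by lia.
by exists (rcons w i); rewrite ?size_rcons ?sw ?cat_rcons //; lia.
Qed.

Lemma in_cone_children t v i i' x : in_cone t (i :: v) x -> in_cone t (i' :: v) x -> i = i'.
Proof.
have cat_eq (w w' : vertex k) : size w = size w' -> w ++ i :: v = w' ++ i' :: v -> i = i'.
  by move=> sw /(congr1 (drop (size w))); rewrite {2}sw !drop_size_cat // => -[].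
case: x => [u|[[s u] j]] /=.
  by case=> w sw -> [w' sw']; apply: cat_eq; rewrite sw sw'.
by case=> _ [w sw ->] [_ [w' sw']]; apply: cat_eq; rewrite sw sw'.
Qed.

Lemma coin_notin_em_support t v i : inr (t, v, i) \notin em_support t (i :: v).
Proof. by apply/negP => /em_support_in_cone [] /=; rewrite ltnn. Qed.

Lemma pr_em_state t v : pr P (event rv_outcome (em_state_of t v)) = iter t (Fpk p k) q.
Proof.
elim: t v => [|t IH] v; first exact: (pr_coord prob_all_rv (inl v)).
rewrite iterS Fpk_binom_tail.
pose Z i a := ~~ a (inr (t, v, i)) && em_state_of t (i :: v) a.
pose S i := inr (t, v, i) :: em_support t (i :: v).
have coin_dep (i : 'I_k) := @depends_on_coord _ (inr (t, v, i) : rv_index k).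
have ZS : {in index_enum 'I_k, forall i, depends_on (S i) (Z i)}.
  move=> i _; exact (depends_on_and (depends_on_not (coin_dep i)) (@em_state_of_depends_on t (i :: v))).
have Zr : {in index_enum 'I_k, forall i,
    pr P (event rv_outcome (Z i)) = (1 - p) * iter t (Fpk p k) q}.
  move=> i _; rewrite (pr_and_indep measurable_rv_coord prob_all_rv (depends_on_not (coin_dep i))
    (@em_state_of_depends_on t (i :: v))); last first.
    by move=> x; rewrite inE => /eqP ->; exact: coin_notin_em_support.
  by rewrite IH (pr_not P measurable_rv_coord (coin_dep i)) (pr_coord prob_all_rv).
have disj : {in index_enum 'I_k &, forall i i', i != i' -> {in S i, forall x, x \notin S i'}}.
  move=> i i' _ _ ii' x; rewrite !inE.
  case/predU1P => [->|/em_support_in_cone Ci]; apply/negP; case/predU1P.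
  - by case=> ii; rewrite ii eqxx in ii'.
  - by case/em_support_in_cone; rewrite ltnn.
  - by move=> xE; move: Ci; rewrite xE => -[]; rewrite ltnn.
  - by move/em_support_in_cone/(in_cone_children Ci)/eqP; rewrite (negbTE ii').
have size_k : size (index_enum 'I_k) = k by rewrite /index_enum -enumT size_enum_ord.
have := pr_count_ge measurable_rv_coord prob_all_rv (index_enum_uniq 'I_k) ZS Zr disj.
by rewrite size_k; apply.
Qed.

End EdgeMajority.

Section FpkProperties.
Variables (R : realType) (k : nat).
Implicit Types p x y : R.

Lemma Fpk_continuous p : continuous (Fpk p k).
Proof.
move=> x; rewrite (_ : Fpk p k = binom_tail k (k.+1)./2 \o *%R (1 - p)); last first.
  by apply/funext => y; rewrite Fpk_binom_tail.
apply: continuous_comp; last exact: binom_tail_continuous.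
by apply: cvgM; [exact: cvg_cst | exact: cvg_id].
Qed.

Lemma Fpk_continuous_p x : continuous (fun p => Fpk p k x).
Proof.
move=> p; rewrite (_ : (fun p => _) = binom_tail k (k.+1)./2 \o (fun p => (1 - p) * x)).
  apply: continuous_comp; last exact: binom_tail_continuous.
  by apply: cvgM; [apply: cvgB; [exact: cvg_cst | exact: cvg_id] | exact: cvg_cst].
by apply/funext => y; rewrite Fpk_binom_tail.
Qed.

Lemma mul1subr_in01 p x : 0 <= p <= 1 -> 0 <= x <= 1 -> 0 <= (1 - p) * x <= x.
Proof. by move=> /andP[p0 p1] /andP[x0 x1]; apply/andP; split; nra. Qed.

Lemma Fpk_in01 p : 0 <= p <= 1 -> forall x, 0 <= x <= 1 -> 0 <= Fpk p k x <= 1.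
Proof.
move=> p01 x x01; have /andP[r0 rx] := mul1subr_in01 p01 x01.
have r01 : 0 <= (1 - p) * x <= 1 by apply/andP; split => //; case/andP: x01; lra.
by rewrite Fpk_binom_tail binom_tail_ge0 // binom_tail_le1.
Qed.

Lemma Fpk1_le1 p : 0 <= p <= 1 -> Fpk p k 1 <= 1.
Proof. by move=> p01; have /andP[] := Fpk_in01 p01 (ltac:(by rewrite ler01 lexx) : 0 <= 1 <= 1). Qed.

Lemma Fpk_homo p : 0 <= p <= 1 ->
  forall x y, 0 <= x -> x <= y -> y <= 1 -> Fpk p k x <= Fpk p k y.
Proof.
move=> /andP[p0 p1] x y x0 xy y1; rewrite !Fpk_binom_tail; apply: binom_tail_homo; nra.
Qed.

Lemma Fpk_antitone_p p p' x : 0 <= p -> p <= p' -> p' <= 1 -> 0 <= x <= 1 ->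
  Fpk p' k x <= Fpk p k x.
Proof.
move=> p0 pp' p'1 /andP[x0 x1]; rewrite !Fpk_binom_tail; apply: binom_tail_homo; nra.
Qed.

Hypothesis k_ge3 : (3 <= k)%N.

Lemma Fpk_le_sqr p x : 0 <= p <= 1 -> 0 <= x <= 1 -> Fpk p k x <= 2%:R ^+ k * x ^+ 2.
Proof.
move=> p01 x01; have /andP[r0 rx] := mul1subr_in01 p01 x01.
have r01 : 0 <= (1 - p) * x <= 1 by apply/andP; split => //; case/andP: x01; lra.
rewrite Fpk_binom_tail; apply: (le_trans (binom_tail_le_pow r01 _ _)).
have half_ge2 : (2 <= (k.+1)./2)%N by apply: (@half_leq 4 k.+1); lia.
rewrite ler_wpM2l ?exprn_ge0 // (le_trans (ler_wiXn2l _ _ half_ge2)) //; last first.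
  by rewrite ler_pXn2r ?nnegrE //; case/andP: x01.
by case/andP: r01; lra.
Qed.

Lemma Fpk0 p : 0 <= p <= 1 -> Fpk p k 0 = 0.
Proof.
move=> p01; apply/eqP; rewrite eq_le.
have := Fpk_le_sqr p01 (x := 0); rewrite expr0n mulr0 => -> //; last by rewrite lexx ler01.
by have /andP[] := Fpk_in01 p01 (x := 0) (ltac:(by rewrite lexx ler01)).
Qed.

Lemma Fpk_lt_id_near0 p x : 0 <= p <= 1 -> 0 < x -> 2%:R ^+ k * x < 1 -> Fpk p k x < x.
Proof.
move=> p01 x0 small; have e1 : 1 <= 2%:R ^+ k :> R by rewrite exprn_ege1 // ler1n.
have x1 : x <= 1 by nra.
apply: (le_lt_trans (Fpk_le_sqr p01 _)); first by rewrite ltW.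
by rewrite expr2; nra.
Qed.

End FpkProperties.

Lemma continuous_left_const (R : realType) (h : R -> R) a b c : b < a ->
  {for a, continuous h} -> (forall y, b < y < a -> h y = c) -> h a = c.
Proof.
move=> ba h_cont hc.
have : h y @[y --> a^'-] --> c.
  apply: cvg_near_cst; near=> y; apply: hc; apply/andP; split.
    by near: y; exact: nbhs_left_gt.
  by near: y; exact: nbhs_left_lt.
exact/cvg_unique/cvg_at_left_filter.
Unshelve. all: by end_near.
Qed.

Section BelowThreshold.
Variables (R : realType) (k : nat) (p pstar phim phip : R).
Hypothesis k_ge3 : (3 <= k)%N.
Hypothesis p_ge0 : 0 <= p.
Hypothesis p_lt_pstar : p < pstar.
Hypothesis pstar_spec : is_pstar k pstar.
Hypothesis phi_order : 0 < phim < phip.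
Hypothesis fixpt_p : forall x, fixpt p k x <-> (x = 0 \/ x = phim \/ x = phip).

Let phim_gt0 : 0 < phim. Proof. by case/andP: phi_order. Qed.
Let phim_lt_phip : phim < phip. Proof. by case/andP: phi_order. Qed.

Lemma pstar_le1 : pstar <= 1.
Proof.
have [/andP[_ ps12] _ _ _] := pstar_spec.
by rewrite (le_trans (ltW ps12)) // ler_pdivrMr // mul1r ler1n.
Qed.

Lemma p_in01 : 0 <= p <= 1.
Proof. by rewrite p_ge0 (le_trans (ltW p_lt_pstar) pstar_le1). Qed.

Lemma fixpoints_p x : 0 <= x <= 1 -> Fpk p k x = x -> x = 0 \/ x = phim \/ x = phip.
Proof. by move=> x01 Fx; apply/fixpt_p. Qed.

Lemma phip_fixpt : phip <= 1 /\ Fpk p k phip = phip.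
Proof. by have [/andP[_ ->]] : fixpt p k phip by apply/fixpt_p; right; right. Qed.

Lemma phim_fixpt : Fpk p k phim = phim.
Proof. by have [] : fixpt p k phim by apply/fixpt_p; right; left. Qed.

Lemma Fpk_neq_id z : 0 < z <= 1 -> z != phim -> z != phip -> Fpk p k z != z.
Proof.
move=> /andP[z0 z1] zNm zNp; apply/eqP => /fixpoints_p.
by rewrite (ltW z0) z1 => /(_ isT) [/eqP|[/eqP|/eqP]]; rewrite ?(gt_eqF z0) ?(negbTE zNm) ?(negbTE zNp).
Qed.

Lemma Fpk_lt_id_below x : 0 < x < phim -> Fpk p k x < x.
Proof.
move=> /andP[x_gt0 x_phim]; have p01 := p_in01; have [phip1 _] := phip_fixpt.
have [small|large] := ltP (2%:R ^+ k * x) 1; first exact: Fpk_lt_id_near0.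
have pow_gt0 : 0 < 2%:R ^+ k :> R by rewrite exprn_gt0.
pose x0 := (2 * 2%:R ^+ k)^-1 : R.
have x0_gt0 : 0 < x0 by rewrite invr_gt0 mulr_gt0.
have x0_small : 2%:R ^+ k * x0 < 1 by rewrite /x0 invfM mulrCA divff ?mulr1 ?gt_eqF //; lra.
have x0_lt_x : x0 < x.
  by rewrite /x0 invfM ltr_pdivrMr // mulrC; apply: (lt_le_trans _ large); lra.
rewrite -(lt_id_fixpoint_free (@Fpk_continuous R k p) (ltW x0_lt_x)).
  exact: Fpk_lt_id_near0.
move=> z /andP[x0z zx]; have z0 : 0 < z := lt_le_trans x0_gt0 x0z.
have z_phim : z < phim := le_lt_trans zx x_phim.
apply: Fpk_neq_id; rewrite ?z0 ?lt_eqF //=; last exact: lt_trans phim_lt_phip.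
by apply: ltW; apply: (lt_le_trans z_phim); apply: (le_trans (ltW phim_lt_phip)).
Qed.

Lemma Fpk_lt_id_above x : phip < x <= 1 -> Fpk p k x < x.
Proof.
move=> /andP[phip_x x1]; have p01 := p_in01.
have nofix (z : R) : x <= z <= 1 -> Fpk p k z != z.
  move=> /andP[xz z1]; have phip_z := lt_le_trans phip_x xz.
  have phim_z := lt_trans phim_lt_phip phip_z.
  by apply: Fpk_neq_id; rewrite ?gt_eqF ?z1 ?andbT ?(lt_trans phim_gt0 phim_z).
by rewrite (lt_id_fixpoint_free (@Fpk_continuous R k p) x1 nofix) lt_neqAle nofix ?lexx ?x1 ?Fpk1_le1.
Qed.

(* If [F_p] lay below the identity, then for [p < p' < pstar] every positive
   fixed point of [F_p'] would be one of [phim], [phip]; letting [p'] tend to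
   [pstar] would give [F_pstar] two positive fixed points. *)
Lemma not_Fpk_le_id : ~ (forall x, 0 <= x <= 1 -> Fpk p k x <= x).
Proof.
move=> F_le_id; have [_ fix_sub [a [a_gt0 fix_pstar]] _] := pstar_spec.
have fixed_near_pstar (p' : R) : p < p' < pstar ->
    Fpk p' k phim = phim /\ Fpk p' k phip = phip.
  move=> /andP[pp' p'ps].
  have p'_sub : 0 <= p' < pstar by rewrite (le_trans p_ge0 (ltW pp')) p'ps.
  have p'1 : p' <= 1 := le_trans (ltW p'ps) pstar_le1.
  have [a' [b' [/andP[a'0 a'b'] fix_p']]] := fix_sub p' p'_sub.
  have pos_fix (y : R) : fixpt p' k y -> 0 < y -> y = phim \/ y = phip.
    move=> [y01 Fy] y0; have Fpy : Fpk p k y = y.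
      by apply/eqP; rewrite eq_le F_le_id //= -{1}Fy Fpk_antitone_p // ltW.
    by case: (fixpoints_p y01 Fpy) => [y00|]; first by rewrite y00 ltxx in y0.
  have [a'01 Fa'] : fixpt p' k a' by apply/fix_p'; right; left.
  have [b'01 Fb'] : fixpt p' k b' by apply/fix_p'; right; right.
  have [ea|ea] := pos_fix a' (conj a'01 Fa') a'0;
  have [eb|eb] := pos_fix b' (conj b'01 Fb') (lt_trans a'0 a'b');
    rewrite ea eb in a'b' Fa' Fb'; by [lra | split].
have [phip1 _] := phip_fixpt.
have fixed_pstar (z : R) : 0 < z <= 1 -> (forall p', p < p' < pstar -> Fpk p' k z = z) -> z = a.
  move=> /andP[z0 z1] Fz; have Fz' := continuous_left_const p_lt_pstar (@Fpk_continuous_p R k z pstar) Fz.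
  have z01 : 0 <= z <= 1 by rewrite (ltW z0) z1.
  by case: (proj1 (fix_pstar z) (conj z01 Fz')) => // z_eq0; rewrite z_eq0 ltxx in z0.
have phip_gt0 := lt_trans phim_gt0 phim_lt_phip.
have phim_a := fixed_pstar phim (ltac:(by rewrite phim_gt0 (le_trans (ltW phim_lt_phip))))
  (fun p' hp' => (fixed_near_pstar p' hp').1).
have phip_a := fixed_pstar phip (ltac:(by rewrite phip_gt0))
  (fun p' hp' => (fixed_near_pstar p' hp').2).
by move: phim_lt_phip; rewrite phim_a phip_a ltxx.
Qed.

Lemma Fpk_gt_id_between x : phim < x < phip -> x < Fpk p k x.
Proof.
move=> /andP[phim_x x_phip]; have p01 := p_in01; have [phip1 Fphip] := phip_fixpt.
have nofix (z : R) : phim < z < phip -> Fpk p k z != z.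
  move=> /andP[mz zp]; apply: Fpk_neq_id; last by rewrite lt_eqF.
    by rewrite (lt_trans phim_gt0 mz) (le_trans (ltW zp)).
  by rewrite gt_eqF.
rewrite ltNge; apply/negP => Fx_le; apply: not_Fpk_le_id => y /andP[y0 y1].
have [y_le_phim|phim_y] := leP y phim.
  have [->|yNphim] := eqVneq y phim; first by rewrite phim_fixpt.
  have [->|yN0] := eqVneq y 0; first by rewrite Fpk0.
  by apply/ltW/Fpk_lt_id_below; rewrite lt_neqAle eq_sym yN0 y0 lt_neqAle yNphim.
have [y_lt_phip|phip_y] := ltP y phip; last first.
  have [<-|yNphip] := eqVneq phip y; first by rewrite Fphip.
  by apply/ltW/Fpk_lt_id_above; rewrite lt_neqAle yNphip phip_y.
have Fx_lt : Fpk p k x < x by rewrite lt_neqAle nofix ?phim_x.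
have nofix_in (z z' : R) : phim < z -> z' < phip -> forall w, z <= w <= z' -> Fpk p k w != w.
  by move=> mz zp w /andP[zw wz']; apply: nofix; apply/andP; split; lra.
apply: ltW; have [xy|yx] := leP x y.
  by rewrite -(lt_id_fixpoint_free (@Fpk_continuous R k p) xy (nofix_in _ _ phim_x y_lt_phip)).
by rewrite (lt_id_fixpoint_free (@Fpk_continuous R k p) (ltW yx) (nofix_in _ _ phim_y x_phip)).
Qed.

Lemma iter_Fpk_cvg_phip q : phim < q <= 1 -> (fun t => iter t (Fpk p k) q) @ \oo --> phip.
Proof.
move=> /andP[phim_q q1]; have p01 := p_in01; have [phip1 Fphip] := phip_fixpt.
have q0 : 0 <= q := ltW (lt_trans phim_gt0 phim_q).
have [q_phip|phip_q] := leP q phip.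
  apply: (iter_cvg_up (@Fpk_continuous R k p) (Fpk_homo k p01) (Fpk_in01 k p01)) => //.
    by rewrite q0 q_phip.
  by move=> x /andP[qx xp]; apply: Fpk_gt_id_between; rewrite (lt_le_trans phim_q qx).
apply: (iter_cvg_down (@Fpk_continuous R k p) (Fpk_homo k p01) (Fpk_in01 k p01)) => //.
  by rewrite (ltW phip_q) (le_trans (ltW phim_gt0) (ltW phim_lt_phip)).
by move=> x /andP[px xq]; apply: Fpk_lt_id_above; rewrite px (le_trans xq).
Qed.

Lemma iter_Fpk_cvg0 q : 0 <= q < phim -> (fun t => iter t (Fpk p k) q) @ \oo --> 0.
Proof.
move=> /andP[q0 q_phim]; have p01 := p_in01; have [phip1 _] := phip_fixpt.
apply: (iter_cvg_down (@Fpk_continuous R k p) (Fpk_homo k p01) (Fpk_in01 k p01)).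
- by rewrite lexx.
- exact: le_trans (ltW q_phim) (le_trans (ltW phim_lt_phip) phip1).
- exact: Fpk0.
- by move=> x /andP[x0 xq]; apply: Fpk_lt_id_below; rewrite x0 (le_lt_trans xq).
Qed.

End BelowThreshold.

Lemma iter_Fpk_cvg0_above (R : realType) (k : nat) (p pstar q : R) :
  (3 <= k)%N -> is_pstar k pstar -> pstar < p <= 1 -> 0 <= q <= 1 ->
  (fun t => iter t (Fpk p k) q) @ \oo --> 0.
Proof.
move=> k_ge3 pstar_spec /andP[ps_p p1] /andP[q0 q1].
have [/andP[ps19 _] _ _ only0] := pstar_spec.
have p0 : 0 <= p by rewrite (le_trans _ (le_trans ps19 (ltW ps_p))) // divr_ge0.
have p01 : 0 <= p <= 1 by rewrite p0 p1.
have nofix (z : R) : 0 < z <= 1 -> Fpk p k z != z.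
  move=> /andP[z0 z1]; apply/eqP => Fz; have z01 : 0 <= z <= 1 by rewrite (ltW z0) z1.
  have ps_p1 : pstar < p <= 1 by rewrite ps_p p1.
  by have := proj1 (only0 p ps_p1 z) (conj z01 Fz) => z_eq0; rewrite z_eq0 ltxx in z0.
have F1 : Fpk p k 1 < 1 by rewrite lt_neqAle nofix ?lexx ?ltr01 ?Fpk1_le1.
apply: (iter_cvg_down (@Fpk_continuous R k p) (Fpk_homo k p01) (Fpk_in01 k p01)) => //.
- by rewrite lexx.
- exact: Fpk0.
move=> x /andP[x0 xq]; have x1 := le_trans xq q1.
rewrite (lt_id_fixpoint_free (@Fpk_continuous R k p) x1) // => z /andP[xz z1].
by apply: nofix; rewrite (lt_le_trans x0 xz).
Qed.

Theorem theorem4p3 (R : realType) (k : nat) (p q : R) (pstar : R)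
  (d : measure_display) (T : measurableType d) (P : probability T R)
  (init : vertex k -> T -> bool) (coin : nat -> vertex k -> 'I_k -> T -> bool) :
  (3 <= k)%N -> odd k ->
  0 <= p <= 1 -> 0 <= q <= 1 ->
  is_pstar k pstar ->
  (forall j, measurable (rv_event init coin j)) ->
  mutually_independent P (rv_event init coin) ->
  (forall v, P [set w | init v w] = q%:E) ->
  (forall t v i, P [set w | coin t v i w] = p%:E) ->
  let prR := fun t => P [set w | em_state init coin t [::] w] in
  (p < pstar -> forall phim phip : R, 0 < phim < phip ->
     (forall x, fixpt p k x <-> (x = 0 \/ x = phim \/ x = phip)) ->
     (phim < q -> prR @ \oo --> phip%:E) /\
     (q < phim -> prR @ \oo --> 0%E)) /\
  (pstar < p -> prR @ \oo --> 0%E).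
Proof.
move=> k_ge3 _ /andP[p0 p1] /andP[q0 q1] pstar_spec meas indep prob_init prob_coin prR.
have prRE : prR = fun t => (iter t (Fpk p k) q)%:E.
  apply/funext => t; rewrite /prR (_ : [set w | _] = event (rv_outcome init coin) (em_state_of t [::])).
    have em_dep := @em_state_of_depends_on k t [::].
    rewrite (pr_measurableE _ (measurable_event (measurable_rv_coord meas) em_dep)).
    by rewrite (pr_em_state meas indep prob_init prob_coin).
  by apply/seteqP; split => w /=; rewrite em_stateE.
have toE (L : R) : (fun t => iter t (Fpk p k) q) @ \oo --> L -> prR @ \oo --> L%:E.
  by move=> cvgL; rewrite prRE; apply: cvg_EFin => //; exact: nearW.
split => [p_lt phim phip phi_order fix3|ps_p].
  split => [phim_q|q_phim]; apply: toE.
    by apply: (iter_Fpk_cvg_phip k_ge3 p0 p_lt pstar_spec phi_order fix3); rewrite phim_q q1.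
  by apply: (iter_Fpk_cvg0 k_ge3 p0 p_lt pstar_spec phi_order fix3); rewrite q0 q_phim.
by apply: toE; apply: (iter_Fpk_cvg0_above k_ge3 pstar_spec); apply/andP.
Qed.
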